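(* Fix $n\ge1$ and real coefficients $a^{\pm}_{i,j},b^{\pm}_{i,j}$ ($i+j\le n$), with $p^{\pm}=\sum_{i+j=0}^n a^{\pm}_{i,j}x^iy^j$, $q^{\pm}=\sum_{i+j=0}^n b^{\pm}_{i,j}x^iy^j$. Then there exist real polynomials $\alpha(h),\beta(h),\gamma(h)$ with $\deg\alpha\le\left[\frac n2\right]$, $\deg\gamma\le\left[\frac n2\right]$, $\deg\beta\le\left[\frac n2\right]-1$, real polynomials $\Psi_{k,m}(h)$ ($2\le k\le n$, $0\le m\le 3[\frac k2]-3$) with $\deg\Psi_{k,m}\le\left[\frac k2\right]-1-\left[\frac{m+2}{3}\right]$, and a real polynomial $\Phi(u)$ of degree at most $3n+\frac{5+(-1)^n}{2}$, such that for all $h\in(0,+\infty)$ $$M(h)=\alpha(h)J_{0,0}(h)+\beta(h)J_{1,1}(h)+\gamma(h)J_{0,1}(h)+\sum_{k=2}^{n}\sum_{m=0}^{3[\frac k2]-3}\Psi_{k,m}(h)\,\sigma(h)^{7+2m}+\Phi(\sigma(h)).$$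
   Context: For $h>0$, $\sigma(h)$ denotes the unique positive solution $s$ of $s^2+s^6=h$; the circle $x^2+y^2=h$ meets $y=x^3$ exactly at $A_h=(-\sigma(h),-\sigma(h)^3)$ and $B_h=(\sigma(h),\sigma(h)^3)$. $L_h^+$ is the arc of the circle $x^2+y^2=h$ in $\{y\ge x^3\}$, oriented clockwise from $A_h$ to $B_h$; $L_h^-$ is the arc in $\{y\le x^3\}$, oriented clockwise from $B_h$ to $A_h$. $J_{i,j}(h)=\int_{L_h^+}x^iy^j\,dx$. The first order Melnikov function is $M(h)=\int_{L_h^+}(q^+dx-p^+dy)+\int_{L_h^-}(q^-dx-p^-dy)$. $[\cdot]$ denotes the integer part; a polynomial with negative degree bound is zero, and empty sums are zero. *)

From Stdlib Require Import Reals Lra Lia Psatz Classical ClassicalEpsilon ClassicalDescription.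
Open Scope R_scope.

Fixpoint psum (f : nat -> R) (N : nat) : R :=
  match N with
  | O => 0
  | S k => psum f k + f k
  end.

(* Evaluation of a univariate real polynomial with coefficients c and
   at most N coefficients (i.e. degree <= N-1; N = 0 means the zero polynomial). *)
Definition peval (c : nat -> R) (N : nat) (h : R) : R :=
  psum (fun i => c i * h ^ i) N.

Definition bpoly (a : nat -> nat -> R) (n : nat) (x y : R) : R :=
  psum (fun i => psum (fun j => a i j * x ^ i * y ^ j) (S (n - i))) (S n).

Definition sigma_h (h : R) : R :=
  epsilon (inhabits 0) (fun s => 0 < s /\ s ^ 2 + s ^ 6 = h).

(* Total (signed) Riemann integral: the Stdlib RiemannInt when f is
   Riemann integrable between a and b, and 0 otherwise. *)
Definition Rint (f : R -> R) (a b : R) : R :=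
  match excluded_middle_informative (inhabited (Riemann_integrable f a b)) with
  | left H =>
      RiemannInt
        (proj1_sig (constructive_indefinite_description (fun _ : Riemann_integrable f a b => True)
           (match H with inhabits pr => ex_intro _ pr I end)))
  | right _ => 0
  end.

Definition cx (h t : R) : R := sqrt h * cos t.
Definition cy (h t : R) : R := sqrt h * sin t.

(* Line integral  int P dx + Q dy  along the arc of the circle x^2+y^2=h
   traversed from angle t1 to angle t2 (t2 < t1 : clockwise). *)
Definition lint (P Q : R -> R -> R) (h t1 t2 : R) : R :=
  Rint (fun t => P (cx h t) (cy h t) * (- sqrt h * sin t)
               + Q (cx h t) (cy h t) * (sqrt h * cos t)) t1 t2.

(* Polar angle of B_h = (sigma_h h, sigma_h h ^3); A_h has angle theta0 h + PI. *)
Definition theta0 (h : R) : R := atan (sigma_h h ^ 2).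

(* L_h^+ : clockwise from A_h (angle theta0+PI) to B_h (angle theta0),
   through the top point (0, sqrt h), i.e. the arc in y >= x^3.
   L_h^- : clockwise from B_h (angle theta0) to A_h (angle theta0-PI),
   through the bottom point, i.e. the arc in y <= x^3. *)
Definition int_Lplus (P Q : R -> R -> R) (h : R) : R :=
  lint P Q h (theta0 h + PI) (theta0 h).
Definition int_Lminus (P Q : R -> R -> R) (h : R) : R :=
  lint P Q h (theta0 h) (theta0 h - PI).

Definition J (i j : nat) (h : R) : R :=
  int_Lplus (fun x y => x ^ i * y ^ j) (fun _ _ => 0) h.

Definition Melnikov (n : nat) (ap am bp bm : nat -> nat -> R) (h : R) : R :=
  int_Lplus (bpoly bp n) (fun x y => - bpoly ap n x y) h
  + int_Lminus (bpoly bm n) (fun x y => - bpoly am n x y) h.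

(* 3n + (5 + (-1)^n)/2 *)
Definition phi_deg (n : nat) : nat := (3 * n + (if Nat.even n then 3 else 2))%nat.

(* Parametrize the circle x^2 + y^2 = h by the angle t. On both arcs the
   integrand of M is a polynomial in sqrt h cos t and sqrt h sin t, so M is a
   linear combination of the integrals
     W_{a,b}(h) = h^((a+b)/2) * int_{theta0}^{theta0+pi} cos^a t sin^b t dt
   (those over the lower arc differ by the sign (-1)^(a+b)), where theta0 is
   the angle of B_h.  Integration by parts gives a recurrence lowering a + b by
   2 whose boundary term vanishes when a + b is even and is a monomial in the
   coordinates (sigma, sigma^3) of B_h otherwise.  Since h = sigma^2 + sigma^6,
   W_{a,b} is c pi h^((a+b)/2) for a + b even and a polynomial of degree at
   most 3(a + b) in sigma(h) for a + b odd.  Hence M(h) = pi h g(h) + f(sigma(h))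
   with deg g <= [n/2], deg f <= 3n + (5 + (-1)^n)/2, and J_{0,1}(h) = pi h / 2
   turns this into the announced form with alpha = beta = Psi = 0. *)

From Stdlib Require Import Reals Lra Lia Psatz FunctionalExtensionality ClassicalEpsilon.
From Coquelicot Require Import Coquelicot.
Open Scope R_scope.

Lemma psum_ext f g N : (forall k, (k < N)%nat -> f k = g k) -> psum f N = psum g N.
Proof.
  induction N as [|N IH]; intros Hfg; simpl; [reflexivity|].
  rewrite IH, Hfg; [reflexivity|lia|intros; apply Hfg; lia].
Qed.

Lemma psum_plus f g N : psum f N + psum g N = psum (fun k => f k + g k) N.
Proof. induction N as [|N IH]; simpl; [ring|]. rewrite <- IH. ring. Qed.

Lemma psum_mult_r f K N : psum f N * K = psum (fun k => f k * K) N.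
Proof. induction N as [|N IH]; simpl; [ring|]. rewrite <- IH. ring. Qed.

Lemma psum_0 f N : (forall k, f k = 0) -> psum f N = 0.
Proof. intros Hf. induction N as [|N IH]; simpl; [reflexivity|]. rewrite IH, Hf. ring. Qed.

Lemma psum_succ_l f N : psum f (S N) = f O + psum (fun k => f (S k)) N.
Proof. induction N as [|N IH]; simpl in *; [ring|]. rewrite IH. ring. Qed.

Lemma psum_add f N M : psum f (N + M) = psum f N + psum (fun k => f (N + k)%nat) M.
Proof.
  induction M as [|M IH]; simpl; [rewrite Nat.add_0_r; ring|].
  rewrite Nat.add_succ_r; simpl. rewrite IH. ring.
Qed.

Lemma peval_0 N x : peval (fun _ => 0) N x = 0.
Proof. apply psum_0; intros; ring. Qed.

Lemma peval_scal c k N x : peval (fun i => k * c i) N x = k * peval c N x.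
Proof. unfold peval. rewrite Rmult_comm, psum_mult_r. apply psum_ext; intros; ring. Qed.

Definition poly_deg (D : nat) (f : R -> R) : Prop :=
  exists c : nat -> R, forall x, f x = peval c (S D) x.

Lemma poly_deg_ext D f g : (forall x, f x = g x) -> poly_deg D f -> poly_deg D g.
Proof. intros Efg [c Hc]; exists c; intros; rewrite <- Efg; auto. Qed.

Lemma poly_deg_le D D' f : (D <= D')%nat -> poly_deg D f -> poly_deg D' f.
Proof.
  intros Hle [c Hc]. exists (fun i => if Nat.leb i D then c i else 0).
  intros x. rewrite Hc. unfold peval.
  replace (S D') with (S D + (D' - D))%nat by lia. rewrite psum_add.
  rewrite (psum_0 (fun k => _ * x ^ (S D + k))), Rplus_0_r.
  - apply psum_ext. intros k Hk. replace (Nat.leb k D) with true; auto.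
    symmetry; apply Nat.leb_le; lia.
  - intros k. replace (Nat.leb (S D + k) D) with false; [ring|].
    symmetry; apply Nat.leb_gt; lia.
Qed.

Lemma poly_deg_plus D f g : poly_deg D f -> poly_deg D g -> poly_deg D (fun x => f x + g x).
Proof.
  intros [c Hc] [d Hd]. exists (fun i => c i + d i). intros x. rewrite Hc, Hd.
  unfold peval. rewrite psum_plus. apply psum_ext; intros; ring.
Qed.

Lemma poly_deg_scal D k f : poly_deg D f -> poly_deg D (fun x => k * f x).
Proof. intros [c Hc]. exists (fun i => k * c i). intros x. rewrite Hc, peval_scal. reflexivity. Qed.

Lemma poly_deg_const k : poly_deg 0 (fun _ => k).
Proof. exists (fun _ => k). intros; unfold peval; simpl; ring. Qed.

Lemma poly_deg_mult_id D f : poly_deg D f -> poly_deg (S D) (fun x => x * f x).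
Proof.
  intros [c Hc]. exists (fun i => match i with O => 0 | S j => c j end).
  intros x. rewrite Hc. unfold peval. rewrite (psum_succ_l _ (S D)).
  rewrite Rmult_comm, psum_mult_r, Rmult_0_l, Rplus_0_l.
  apply psum_ext; intros; simpl; ring.
Qed.

Lemma poly_deg_mult_pow D k f : poly_deg D f -> poly_deg (k + D) (fun x => x ^ k * f x).
Proof.
  intros Hf; induction k as [|k IH]; simpl.
  - eapply poly_deg_ext; [|exact Hf]; intros; simpl; ring.
  - eapply poly_deg_ext; [|apply poly_deg_mult_id, IH]; intros; simpl; ring.
Qed.

Lemma poly_deg_monomial D k c : (k <= D)%nat -> poly_deg D (fun x => c * x ^ k).
Proof.
  intros Hk. apply (poly_deg_le (k + 0)); [lia|].
  eapply poly_deg_ext; [|apply poly_deg_mult_pow, (poly_deg_const c)]; intros; simpl; ring.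
Qed.

Lemma poly_deg_0 D : poly_deg D (fun _ => 0).
Proof. eapply poly_deg_ext; [|apply (poly_deg_monomial D 0 0); lia]; intros; simpl; ring. Qed.

Lemma sigma_h_spec h : 0 < h -> 0 < sigma_h h /\ sigma_h h ^ 2 + sigma_h h ^ 6 = h.
Proof.
  intros Hh. unfold sigma_h. apply epsilon_spec.
  destruct (IVT (fun s => s ^ 2 + s ^ 6 - h) 0 (h + 1)) as [z [[Hz0 _] Hz]].
  - intros x. reg.
  - lra.
  - simpl; lra.
  - assert (0 <= (h + 1) ^ 6) by (apply pow_le; lra). simpl in *; nra.
  - exists z. split; [|lra]. destruct Hz0 as [Hz0|<-]; [exact Hz0|]. simpl in Hz; lra.
Qed.

Lemma B_h_polar h : 0 < h ->
  sqrt h * cos (theta0 h) = sigma_h h /\ sqrt h * sin (theta0 h) = sigma_h h ^ 3.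
Proof.
  intros Hh. destruct (sigma_h_spec h Hh) as [Hs Heq]. set (s := sigma_h h) in *.
  unfold theta0. fold s. rewrite cos_atan, sin_atan.
  assert (Hq : 0 < 1 + (s ^ 2)²) by (unfold Rsqr; nra).
  assert (Hsq : sqrt h = s * sqrt (1 + (s ^ 2)²)).
  { rewrite <- Heq. replace (s ^ 2 + s ^ 6) with (s * s * (1 + (s ^ 2)²)) by (unfold Rsqr; ring).
    rewrite sqrt_mult_alt by nra. rewrite sqrt_square by lra. reflexivity. }
  assert (0 < sqrt (1 + (s ^ 2)²)) by (apply sqrt_lt_R0; lra).
  rewrite Hsq. split; field; lra.
Qed.

Lemma RInt_plus_R (f g : R -> R) a b : ex_RInt f a b -> ex_RInt g a b ->
  RInt (fun t => f t + g t) a b = RInt f a b + RInt g a b.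
Proof. exact (RInt_plus f g a b). Qed.

Lemma RInt_scal_R (f : R -> R) k a b : ex_RInt f a b ->
  RInt (fun t => k * f t) a b = k * RInt f a b.
Proof. exact (RInt_scal f a b k). Qed.

Lemma RInt_ext_R (f g : R -> R) a b :
  (forall t, Rmin a b < t < Rmax a b -> f t = g t) -> RInt f a b = RInt g a b.
Proof. exact (RInt_ext f g a b). Qed.

Lemma RInt_swap_R (f : R -> R) a b : ex_RInt f a b -> RInt f b a = - RInt f a b.
Proof. intros Hf. exact (eq_sym (opp_RInt_swap f a b Hf)). Qed.

Lemma ex_RInt_continuous_R (f : R -> R) a b : (forall t, continuous f t) -> ex_RInt f a b.
Proof. intros Hf. apply (ex_RInt_continuous (V:=R_CompleteNormedModule)); auto. Qed.

Lemma RInt_derive_R (F f : R -> R) a b :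
  (forall t, is_derive F t (f t)) -> (forall t, continuous f t) -> RInt f a b = F b - F a.
Proof. intros HF Hf. apply is_RInt_unique, (is_RInt_derive (V:=R_CompleteNormedModule)); auto. Qed.

Lemma Rint_RInt (f : R -> R) a b : (forall t, continuous f t) -> Rint f a b = RInt f a b.
Proof.
  intros Hf. unfold Rint. destruct (ClassicalDescription.excluded_middle_informative _) as [H|H].
  - symmetry. apply RInt_Reals.
  - exfalso. apply H. constructor. apply ex_RInt_Reals_0, ex_RInt_continuous_R, Hf.
Qed.

Lemma continuous_cos_sin_pow a b t : continuous (fun t => cos t ^ a * sin t ^ b) t.
Proof. apply (ex_derive_continuous (K:=R_AbsRing) (V:=R_NormedModule)). auto_derive. auto. Qed.

Lemma ex_RInt_cos_sin_pow a b x y : ex_RInt (fun t => cos t ^ a * sin t ^ b) x y.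
Proof. apply ex_RInt_continuous_R. intros; apply continuous_cos_sin_pow. Qed.

Definition Ics (a b : nat) (th : R) : R := RInt (fun t => cos t ^ a * sin t ^ b) th (th + PI).

Lemma Ics_pythagoras a b th : Ics (S (S a)) b th + Ics a (S (S b)) th = Ics a b th.
Proof.
  unfold Ics. rewrite <- RInt_plus_R by apply ex_RInt_cos_sin_pow.
  apply RInt_ext_R. intros t _. pose proof (sin2_cos2 t) as Hpyth. unfold Rsqr in Hpyth.
  transitivity (cos t ^ a * sin t ^ b * (sin t * sin t + cos t * cos t)); [simpl; ring|].
  rewrite Hpyth. ring.
Qed.

(* Integration by parts: the integrand is the derivative of cos^(a+1) sin^(b+1),
   whose values at th and th + pi differ by the factor (-1)^(a+b). *)
Lemma Ics_parts a b th :
  INR (S b) * Ics (S (S a)) b th - INR (S a) * Ics a (S (S b)) th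
  = ((-1) ^ (a + b) - 1) * (cos th ^ S a * sin th ^ S b).
Proof.
  unfold Ics, Rminus at 1. rewrite Ropp_mult_distr_l.
  rewrite <- !RInt_scal_R by apply ex_RInt_cos_sin_pow.
  rewrite <- RInt_plus_R by exact (ex_RInt_scal _ _ _ _ (ex_RInt_cos_sin_pow _ _ _ _)).
  rewrite (RInt_ext_R _ (Derive (fun t => cos t ^ S a * sin t ^ S b))).
  - rewrite RInt_Derive.
    + rewrite cos_plus, sin_plus, cos_PI, sin_PI.
      replace (cos th * -1 - sin th * 0) with (-1 * cos th) by ring.
      replace (sin th * -1 + cos th * 0) with (-1 * sin th) by ring.
      rewrite !Rpow_mult_distr, pow_add. simpl. ring.
    + intros. auto_derive. auto.
    + intros. eapply continuous_ext.
      * intros t. symmetry. apply is_derive_unique. auto_derive; [auto|]. reflexivity.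
      * apply (ex_derive_continuous (K:=R_AbsRing) (V:=R_NormedModule)). auto_derive. auto.
  - intros t _. symmetry. apply is_derive_unique. auto_derive; auto.
    change (match a with 0%nat => 1 | S _ => INR a + 1 end) with (INR (S a)).
    change (match b with 0%nat => 1 | S _ => INR b + 1 end) with (INR (S b)).
    rewrite <- !tech_pow_Rmult. ring.
Qed.

Lemma Ics_0_0 th : Ics 0 0 th = PI.
Proof.
  unfold Ics. rewrite (RInt_derive_R (fun t => t)).
  - ring.
  - intros t. auto_derive; auto. simpl; ring.
  - intros; apply continuous_cos_sin_pow.
Qed.

Lemma Ics_1_0 th : Ics 1 0 th = - 2 * sin th.
Proof.
  unfold Ics. rewrite (RInt_derive_R sin).
  - rewrite sin_plus, cos_PI, sin_PI. ring.
  - intros t. auto_derive; auto. simpl; ring.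
  - intros; apply continuous_cos_sin_pow.
Qed.

Lemma Ics_0_1 th : Ics 0 1 th = 2 * cos th.
Proof.
  unfold Ics. rewrite (RInt_derive_R (fun t => - cos t)).
  - rewrite cos_plus, cos_PI, sin_PI. ring.
  - intros t. auto_derive; auto. simpl; ring.
  - intros; apply continuous_cos_sin_pow.
Qed.

Lemma Ics_1_1 th : Ics 1 1 th = 0.
Proof.
  unfold Ics. rewrite (RInt_derive_R (fun t => sin t ^ 2 / 2)).
  - rewrite sin_plus, cos_PI, sin_PI. field.
  - intros t. auto_derive; auto. simpl; field.
  - intros; apply continuous_cos_sin_pow.
Qed.

Lemma Ics_0_2 th : Ics 0 2 th = PI / 2.
Proof.
  pose proof (Ics_pythagoras 0 0 th) as Hsum. pose proof (Ics_parts 0 0 th) as Hdiff.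
  rewrite Ics_0_0 in Hsum. simpl in Hdiff. lra.
Qed.

Lemma RInt_cos_sin_pow_prev a b th :
  RInt (fun t => cos t ^ a * sin t ^ b) (th - PI) th = (-1) ^ (a + b) * Ics a b th.
Proof.
  unfold Ics. rewrite <- RInt_scal_R by apply ex_RInt_cos_sin_pow.
  transitivity (RInt (fun t => cos t ^ a * sin t ^ b) (1 * th + - PI) (1 * (th + PI) + - PI)).
  { f_equal; ring. }
  rewrite <- (RInt_comp_lin (V:=R_CompleteNormedModule)) by apply ex_RInt_cos_sin_pow.
  apply RInt_ext_R. intros t _. change (scal 1 ?x) with (1 * x).
  replace (1 * t + - PI) with (- (PI - t)) by ring.
  rewrite cos_neg, sin_neg, cos_minus, sin_minus, cos_PI, sin_PI.
  replace (-1 * cos t + 0 * sin t) with (-1 * cos t) by ring.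
  replace (- (0 * cos t - -1 * sin t)) with (-1 * sin t) by ring.
  rewrite !Rpow_mult_distr, pow_add. ring.
Qed.

Definition W (a b : nat) (h : R) : R := sqrt h ^ (a + b) * Ics a b (theta0 h).

Lemma W_recurrence a b h : 0 < h ->
  let E := ((-1) ^ (a + b) - 1) * sigma_h h ^ (S a + 3 * S b) in
  let d := INR (S a) + INR (S b) in
  W (S (S a)) b h = (INR (S a) * (h * W a b h) + E) / d /\
  W a (S (S b)) h = (INR (S b) * (h * W a b h) - E) / d.
Proof.
  intros Hh E d. destruct (B_h_polar h Hh) as [Hc Hs].
  assert (Hsq : sqrt h ^ 2 = h) by (rewrite <- Rsqr_pow2; apply Rsqr_sqrt; lra).
  assert (Hd : 0 < d) by (unfold d; pose proof (pos_INR a); pose proof (pos_INR b); rewrite !S_INR; lra).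
  assert (Hsum : W (S (S a)) b h + W a (S (S b)) h = h * W a b h).
  { unfold W. replace (S (S a) + b)%nat with (a + b + 2)%nat by lia.
    replace (a + S (S b))%nat with (a + b + 2)%nat by lia.
    rewrite pow_add, Hsq, <- (Ics_pythagoras a b). ring. }
  assert (Hdiff : INR (S b) * W (S (S a)) b h - INR (S a) * W a (S (S b)) h = E).
  { unfold W, E. replace (S (S a) + b)%nat with (S a + S b)%nat by lia.
    replace (a + S (S b))%nat with (S a + S b)%nat by lia.
    transitivity (sqrt h ^ (S a + S b) *
      (INR (S b) * Ics (S (S a)) b (theta0 h) - INR (S a) * Ics a (S (S b)) (theta0 h))); [ring|].
    rewrite (pow_add (sigma_h h)), (pow_mult (sigma_h h)), <- Hs, <- Hc, Ics_parts, pow_add.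
    rewrite !Rpow_mult_distr. ring. }
  assert (Ha : d * W (S (S a)) b h = INR (S a) * (h * W a b h) + E)
    by (rewrite <- Hsum, <- Hdiff; unfold d; ring).
  assert (Hb : d * W a (S (S b)) h = INR (S b) * (h * W a b h) - E)
    by (rewrite <- Hsum, <- Hdiff; unfold d; ring).
  split; [rewrite <- Ha | rewrite <- Hb]; field; lra.
Qed.

Lemma W_reduce a' b' : (2 <= a')%nat \/ (2 <= b')%nat ->
  exists a b c e, (a + b + 2 = a' + b')%nat /\
    forall h, 0 < h ->
      W a' b' h = c * (h * W a b h) + e * ((-1) ^ (a + b) - 1) * sigma_h h ^ (S a + 3 * S b).
Proof.
  intros [Ha|Hb].
  - destruct a' as [|[|a]]; try lia.
    exists a, b', (INR (S a) / (INR (S a) + INR (S b'))), (1 / (INR (S a) + INR (S b'))).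
    split; [lia|]. intros h Hh. rewrite (proj1 (W_recurrence a b' h Hh)). field.
    pose proof (pos_INR a); pose proof (pos_INR b'); rewrite !S_INR; lra.
  - destruct b' as [|[|b]]; try lia.
    exists a', b, (INR (S b) / (INR (S a') + INR (S b))), (-1 / (INR (S a') + INR (S b))).
    split; [lia|]. intros h Hh. rewrite (proj2 (W_recurrence a' b h Hh)). field.
    pose proof (pos_INR a'); pose proof (pos_INR b); rewrite !S_INR; lra.
Qed.

Lemma W_even m : forall a b, (a + b = 2 * m)%nat ->
  exists c, forall h, 0 < h -> W a b h = c * PI * h ^ m.
Proof.
  induction m as [|m IH]; intros a' b' Hab.
  - assert (a' = 0%nat /\ b' = 0%nat) as [-> ->] by lia.
    exists 1. intros h Hh. unfold W. rewrite Ics_0_0. simpl; ring.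
  - destruct (Nat.le_gt_cases 2 a') as [Ha|Ha]; [|destruct (Nat.le_gt_cases 2 b') as [Hb|Hb]].
    3:{ assert (a' = 1%nat /\ b' = 1%nat) as [-> ->] by lia.
        exists 0. intros h Hh. unfold W. rewrite Ics_1_1. ring. }
    all: destruct (W_reduce a' b' ltac:(lia)) as (a & b & c & e & Hsz & HW);
         destruct (IH a b ltac:(lia)) as [c0 Hc0];
         exists (c * c0); intros h Hh; rewrite HW, Hc0 by exact Hh;
         rewrite (Nat.add_comm a b) in *; replace (b + a)%nat with (2 * m)%nat by lia;
         rewrite pow_1_even; simpl; ring.
Qed.

Lemma poly_deg_sigma_step D D' f k1 k2 e : (D + 6 <= D')%nat -> (e <= D')%nat -> poly_deg D f ->
  poly_deg D' (fun x => k1 * ((x ^ 2 + x ^ 6) * f x) + k2 * x ^ e).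
Proof.
  intros HD He Hf. apply poly_deg_plus; [|apply poly_deg_monomial; exact He].
  eapply poly_deg_ext; [|apply (poly_deg_scal _ k1), poly_deg_plus;
    [apply (poly_deg_le (2 + D)); [lia|apply poly_deg_mult_pow, Hf]
    |apply (poly_deg_le (6 + D)); [lia|apply poly_deg_mult_pow, Hf]]].
  intros; simpl; ring.
Qed.

Lemma W_odd m : forall a b, (a + b = 2 * m + 1)%nat ->
  exists f, poly_deg (3 * (a + b)) f /\ forall h, 0 < h -> W a b h = f (sigma_h h).
Proof.
  induction m as [|m IH]; intros a' b' Hab.
  - destruct a' as [|[|a]]; destruct b' as [|[|b]]; try lia.
    + exists (fun x => 2 * x ^ 1). split; [apply poly_deg_monomial; lia|].
      intros h Hh. unfold W. rewrite Ics_0_1, <- (proj1 (B_h_polar h Hh)). simpl; ring.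
    + exists (fun x => -2 * x ^ 3). split; [apply poly_deg_monomial; lia|].
      intros h Hh. unfold W. rewrite Ics_1_0, <- (proj2 (B_h_polar h Hh)). simpl; ring.
  - destruct (W_reduce a' b' ltac:(lia)) as (a & b & c & e & Hsz & HW).
    destruct (IH a b ltac:(lia)) as (f & Hf & Hfe).
    exists (fun x => c * ((x ^ 2 + x ^ 6) * f x) + (-2 * e) * x ^ (S a + 3 * S b)).
    split; [apply (poly_deg_sigma_step (3 * (a + b))); auto; lia|].
    intros h Hh. rewrite HW, Hfe by exact Hh. destruct (sigma_h_spec h Hh) as [_ Hsig].
    replace (a + b)%nat with (S (2 * m)) by lia. rewrite pow_1_odd, Hsig. ring.
Qed.

Definition melnikov_shape (n : nat) (G : R -> R) : Prop :=
  exists g f, poly_deg (n / 2) g /\ poly_deg (phi_deg n) f /\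
    forall h, 0 < h -> G h = PI * h * g h + f (sigma_h h).

Lemma melnikov_shape_ext n G G' :
  (forall h, 0 < h -> G h = G' h) -> melnikov_shape n G -> melnikov_shape n G'.
Proof.
  intros E (g & f & Hg & Hf & HG). exists g, f. repeat split; auto.
  intros h Hh; rewrite <- E; auto.
Qed.

Lemma melnikov_shape_plus n G1 G2 :
  melnikov_shape n G1 -> melnikov_shape n G2 -> melnikov_shape n (fun h => G1 h + G2 h).
Proof.
  intros (g1 & f1 & Hg1 & Hf1 & H1) (g2 & f2 & Hg2 & Hf2 & H2).
  exists (fun x => g1 x + g2 x), (fun x => f1 x + f2 x).
  repeat split; try (apply poly_deg_plus; auto). intros h Hh. rewrite H1, H2 by auto. ring.
Qed.

Lemma melnikov_shape_scal n k G : melnikov_shape n G -> melnikov_shape n (fun h => k * G h).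
Proof.
  intros (g & f & Hg & Hf & H). exists (fun x => k * g x), (fun x => k * f x).
  repeat split; try (apply poly_deg_scal; auto). intros h Hh. rewrite H by auto. ring.
Qed.

Lemma half_le_div2 n m : (2 * m <= n + 1)%nat -> (m - 1 <= n / 2)%nat.
Proof.
  intros H. pose proof (Nat.div_mod n 2 ltac:(lia)). pose proof (Nat.mod_upper_bound n 2 ltac:(lia)). lia.
Qed.

Lemma odd_le_phi_deg n m : (2 * m + 1 <= n + 1)%nat -> (3 * (2 * m + 1) <= phi_deg n)%nat.
Proof.
  intros H. unfold phi_deg. destruct (Nat.even n) eqn:E; [lia|].
  assert (Hodd : Nat.odd n = true) by (rewrite <- Nat.negb_even, E; auto).
  apply Nat.odd_spec in Hodd. destruct Hodd as [k ->]. lia.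
Qed.

Lemma melnikov_shape_W n a b : (1 <= a + b <= n + 1)%nat -> melnikov_shape n (W a b).
Proof.
  intros Hab. destruct (Nat.Even_or_Odd (a + b)) as [[m Hm]|[m Hm]].
  - destruct (W_even m a b Hm) as [c Hc].
    exists (fun x => c * x ^ (m - 1)), (fun _ => 0). repeat split.
    + apply poly_deg_monomial, half_le_div2; lia.
    + apply poly_deg_0.
    + intros h Hh. rewrite Hc by exact Hh. replace m with (S (m - 1)) at 1 by lia. simpl; ring.
  - destruct (W_odd m a b Hm) as (f & Hf & Hfe).
    exists (fun _ => 0), f. repeat split.
    + apply poly_deg_0.
    + eapply poly_deg_le; [|exact Hf]. rewrite Hm. apply odd_le_phi_deg. lia.
    + intros h Hh. rewrite Hfe by exact Hh. ring.
Qed.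

Definition arc_shape (n : nat) (g : R -> R -> R) : Prop :=
  (forall h t, continuous (g h) t) /\
  melnikov_shape n (fun h => RInt (g h) (theta0 h) (theta0 h + PI)) /\
  melnikov_shape n (fun h => RInt (g h) (theta0 h - PI) (theta0 h)).

Lemma arc_shape_ext n g g' : (forall h t, g h t = g' h t) -> arc_shape n g -> arc_shape n g'.
Proof.
  intros E Hg. replace g' with g; [exact Hg|].
  apply functional_extensionality; intros h; apply functional_extensionality; intros t; auto.
Qed.

Lemma arc_shape_plus n g1 g2 : arc_shape n g1 -> arc_shape n g2 -> arc_shape n (fun h t => g1 h t + g2 h t).
Proof.
  intros (C1 & P1 & M1) (C2 & P2 & M2). split; [|split].
  - intros h t. apply (continuous_plus (g1 h) (g2 h)); auto.
  - eapply melnikov_shape_ext; [|apply (melnikov_shape_plus _ _ _ P1 P2)]. intros h _.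
    rewrite RInt_plus_R; auto; apply ex_RInt_continuous_R; auto.
  - eapply melnikov_shape_ext; [|apply (melnikov_shape_plus _ _ _ M1 M2)]. intros h _.
    rewrite RInt_plus_R; auto; apply ex_RInt_continuous_R; auto.
Qed.

Lemma arc_shape_monomial n c a b : (1 <= a + b <= n + 1)%nat ->
  arc_shape n (fun h t => c * sqrt h ^ (a + b) * (cos t ^ a * sin t ^ b)).
Proof.
  intros Hab. split; [|split].
  - intros h t. apply (ex_derive_continuous (K:=R_AbsRing) (V:=R_NormedModule)). auto_derive. auto.
  - eapply melnikov_shape_ext; [|apply (melnikov_shape_scal _ c), (melnikov_shape_W n a b Hab)].
    intros h _. rewrite RInt_scal_R by apply ex_RInt_cos_sin_pow. unfold W, Ics. ring.
  - eapply melnikov_shape_ext;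
      [|apply (melnikov_shape_scal _ (c * (-1) ^ (a + b))), (melnikov_shape_W n a b Hab)].
    intros h _. rewrite RInt_scal_R, RInt_cos_sin_pow_prev by apply ex_RInt_cos_sin_pow.
    unfold W. ring.
Qed.

Lemma arc_shape_psum n N (g : nat -> R -> R -> R) :
  (forall k, (k < N)%nat -> arc_shape n (g k)) -> arc_shape n (fun h t => psum (fun k => g k h t) N).
Proof.
  induction N as [|N IH]; intros Hg; simpl.
  - apply (arc_shape_ext n (fun h t => 0 * sqrt h ^ (1 + 0) * (cos t ^ 1 * sin t ^ 0))).
    + intros; ring.
    + apply arc_shape_monomial; lia.
  - apply (arc_shape_plus n (fun h t => psum (fun k => g k h t) N) (g N)).
    + apply IH; intros; apply Hg; lia.
    + apply Hg; lia.
Qed.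

Definition integrand (P Q : R -> R -> R) (h t : R) : R :=
  P (cx h t) (cy h t) * (- sqrt h * sin t) + Q (cx h t) (cy h t) * (sqrt h * cos t).

Lemma integrand_bpoly A B n h t :
  integrand (bpoly A n) (fun x y => - bpoly B n x y) h t =
  psum (fun i => psum (fun j =>
     (- A i j) * sqrt h ^ (i + S j) * (cos t ^ i * sin t ^ S j)
     + (- B i j) * sqrt h ^ (S i + j) * (cos t ^ S i * sin t ^ j)) (S (n - i))) (S n).
Proof.
  unfold integrand, bpoly, cx, cy.
  rewrite <- (Ropp_mult_distr_l (psum _ _)), Ropp_mult_distr_r.
  rewrite !psum_mult_r, psum_plus. apply psum_ext. intros i _.
  rewrite !psum_mult_r, psum_plus. apply psum_ext. intros j _.
  rewrite !Rpow_mult_distr, !pow_add. rewrite <- !tech_pow_Rmult. ring.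
Qed.

Lemma arc_shape_integrand n A B : arc_shape n (integrand (bpoly A n) (fun x y => - bpoly B n x y)).
Proof.
  eapply arc_shape_ext; [intros h t; symmetry; apply integrand_bpoly|].
  apply (arc_shape_psum n (S n) (fun i h t => psum (fun j => _) (S (n - i)))). intros i Hi.
  apply (arc_shape_psum n (S (n - i)) (fun j h t => _ + _)). intros j Hj.
  apply (arc_shape_plus n (fun h t => _) (fun h t => _)); apply arc_shape_monomial; lia.
Qed.

Lemma int_Lplus_RInt P Q h : (forall t, continuous (integrand P Q h) t) ->
  int_Lplus P Q h = - RInt (integrand P Q h) (theta0 h) (theta0 h + PI).
Proof.
  intros Hc. change (Rint (integrand P Q h) (theta0 h + PI) (theta0 h)
    = - RInt (integrand P Q h) (theta0 h) (theta0 h + PI)).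
  rewrite Rint_RInt, RInt_swap_R by (try apply ex_RInt_continuous_R; exact Hc). reflexivity.
Qed.

Lemma int_Lminus_RInt P Q h : (forall t, continuous (integrand P Q h) t) ->
  int_Lminus P Q h = - RInt (integrand P Q h) (theta0 h - PI) (theta0 h).
Proof.
  intros Hc. change (Rint (integrand P Q h) (theta0 h) (theta0 h - PI)
    = - RInt (integrand P Q h) (theta0 h - PI) (theta0 h)).
  rewrite Rint_RInt, RInt_swap_R by (try apply ex_RInt_continuous_R; exact Hc). reflexivity.
Qed.

Lemma melnikov_shape_Melnikov n ap am bp bm : melnikov_shape n (Melnikov n ap am bp bm).
Proof.
  destruct (arc_shape_integrand n bp ap) as (Cp & Pp & _).
  destruct (arc_shape_integrand n bm am) as (Cm & _ & Mm).
  eapply melnikov_shape_ext;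
    [|apply melnikov_shape_plus; apply (melnikov_shape_scal n (-1)); [exact Pp|exact Mm]].
  intros h _. unfold Melnikov. rewrite int_Lplus_RInt, int_Lminus_RInt by auto. ring.
Qed.

Lemma J_0_1 h : 0 < h -> J 0 1 h = PI * h / 2.
Proof.
  intros Hh. unfold J.
  rewrite int_Lplus_RInt by (intros t; apply (ex_derive_continuous (K:=R_AbsRing) (V:=R_NormedModule));
    unfold integrand, cx, cy; auto_derive; auto).
  rewrite (RInt_ext_R _ (fun t => - sqrt h ^ 2 * (cos t ^ 0 * sin t ^ 2))).
  2:{ intros t _. unfold integrand, cx, cy. simpl. ring. }
  rewrite RInt_scal_R by apply ex_RInt_cos_sin_pow.
  fold (Ics 0 2 (theta0 h)). rewrite Ics_0_2, <- Rsqr_pow2, Rsqr_sqrt by lra. field.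
Qed.

Theorem lemma3p3 (n : nat) (Hn : (1 <= n)%nat) (ap am bp bm : nat -> nat -> R) :
  exists (alpha beta gamma : nat -> R) (Psi : nat -> nat -> nat -> R) (Phi : nat -> R),
    forall h : R, 0 < h ->
      Melnikov n ap am bp bm h =
        peval alpha (S (n / 2)%nat) h * J 0 0 h
        + peval beta (n / 2)%nat h * J 1 1 h
        + peval gamma (S (n / 2)%nat) h * J 0 1 h
        + psum (fun k =>
                  if Nat.leb 2 k then
                    psum (fun m =>
                            peval (Psi k m) (k / 2 - (m + 2) / 3)%nat h
                            * sigma_h h ^ (7 + 2 * m)%nat)
                         (3 * (k / 2) - 2)%nat
                  else 0) (S n)
        + peval Phi (S (phi_deg n)) (sigma_h h).
Proof.
  destruct (melnikov_shape_Melnikov n ap am bp bm) as (g & f & [cg Hg] & [cf Hf] & HM).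
  exists (fun _ => 0), (fun _ => 0), (fun i => 2 * cg i), (fun _ _ _ => 0), cf.
  intros h Hh.
  rewrite HM, J_0_1, !peval_0, peval_scal, <- Hg, <- Hf by exact Hh.
  rewrite (psum_0 _ (S n)); [field|].
  intros k. destruct (Nat.leb 2 k); [|reflexivity].
  apply psum_0. intros m. rewrite peval_0. ring.
Qed.
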